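(* Let $r\ge 1$ be an integer. For integers $n,k\ge 0$ let $C(n,k,r)$ be the number of compositions of $n$ into $k$ positive parts that have no run of length $\ge r$ (with $C(0,0,r)=1$ counting the empty composition). Then, as formal power series in $x,q$, \[\sum_{n,k\ge 0}C(n,k,r)\,x^nq^k=\frac{1}{1-\frac{xq}{1-x}+q^r\sum_{j\ge 1}\frac{x^{rj}(1-qx^j)}{1-q^rx^{rj}}}.\]
   Context: A composition of $n$ into $k$ parts is an ordered sequence $(a_1,\dots,a_k)$ of positive integers with $a_1+\dots+a_k=n$. A run in a composition is a maximal string of consecutive identical parts; its length is the number of parts in it. For example, $28=3+5+5+5+3+3+4$ has run lengths $1,3,2,1$. *)

From mathcomp Require Import all_boot all_order all_algebra.
Set Implicit Arguments. Unset Strict Implicit. Unset Printing Implicit Defensive.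
Import Order.TTheory GRing.Theory Num.Theory.

Fixpoint rl_aux (a c : nat) (s : seq nat) : seq nat :=
  match s with
  | [::] => [:: c]
  | b :: s' => if b == a then rl_aux a c.+1 s' else c :: rl_aux b 1 s'
  end.

Definition runlens (s : seq nat) : seq nat :=
  if s is a :: s' then rl_aux a 1 s' else [::].

Definition is_composition (n k : nat) (s : seq nat) : bool :=
  [&& size s == k, all (fun a => 0 < a) s & sumn s == n].

Definition no_long_run (r : nat) (s : seq nat) : bool :=
  all (fun l => l < r) (runlens s).

(* C(n,k,r): every part of a composition of n is <= n, so compositions of n
   into k parts are exactly the sequences [seq val i | i <- t] for
   t : k.-tuple 'I_n.+1 satisfying is_composition (injective encoding). *)
Definition Ccount (n k r : nat) : nat :=
  #|[set t : k.-tuple 'I_n.+1 |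
      is_composition n k (map val t) && no_long_run r (map val t)]|.

Local Open Scope ring_scope.

(* f n k = coefficient of x^n q^k *)
Definition fps := nat -> nat -> int.

Definition fps_const (c : int) : fps := fun n k => if (n == 0)%N && (k == 0)%N then c else 0.
Definition fps_x : fps := fun n k => if (n == 1)%N && (k == 0)%N then 1 else 0.
Definition fps_q : fps := fun n k => if (n == 0)%N && (k == 1)%N then 1 else 0.
Definition fps_add (f g : fps) : fps := fun n k => f n k + g n k.
Definition fps_sub (f g : fps) : fps := fun n k => f n k - g n k.
Definition fps_mul (f g : fps) : fps := fun n k =>
  \sum_(i < n.+1) \sum_(j < k.+1) f i j * g (n - i)%N (k - j)%N.
Fixpoint fps_pow (f : fps) (m : nat) : fps :=
  if m is m'.+1 then fps_mul f (fps_pow f m') else fps_const 1.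

(* 1/(1-b) = sum_{i>=0} b^i, for b with zero constant term: then b^i has no
   monomial of total degree < i, so the coefficient of x^n q^k only receives
   contributions from i <= n+k and the truncated sum is the exact one. *)
Definition fps_geom (b : fps) : fps := fun n k =>
  \sum_(i < (n + k).+1) fps_pow b i n k.

(* 1/a for a with constant term 1:  1/a = 1/(1-(1-a)) *)
Definition fps_inv (a : fps) : fps := fps_geom (fps_sub (fps_const 1) a).

(* sum_{j>=1} f j, for a family in which f j has no monomial of total degree
   < j (true for the family used below, which has the factor x^{rj}, r >= 1):
   the truncated sum is then the exact (locally finite) sum. *)
Definition fps_sum1 (f : nat -> fps) : fps := fun n k =>
  \sum_(1 <= j < (n + k).+1) f j n k.

Definition lhs_series (r : nat) : fps := fun n k => (Ccount n k r)%:Z.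

Definition denom_series (r : nat) : fps :=
  fps_add
    (fps_sub (fps_const 1) (fps_mul (fps_mul fps_x fps_q) (fps_geom fps_x)))
    (fps_mul (fps_pow fps_q r)
       (fps_sum1 (fun j =>
          fps_mul (fps_mul (fps_pow fps_x (r * j))
                           (fps_sub (fps_const 1) (fps_mul fps_q (fps_pow fps_x j))))
                  (fps_geom (fps_mul (fps_pow fps_q r) (fps_pow fps_x (r * j))))))).

Definition rhs_series (r : nat) : fps := fps_inv (denom_series r).

(* Write C(n, k) for the number of compositions of n into k parts with no run
   of length >= r, and S_a(n, k) for those whose first part is a.  Such a
   composition starts with a block of exactly l copies of a, 1 <= l < r,
   followed by an admissible composition not starting with a, so
     S_a(n, k) = sum_(1 <= l < r) (C - S_a)(n - l a, k - l).
   Comparing this relation at consecutive shifts gives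
     S_a(n, k) = C(n - a, k - 1) - C(n - r a, k - r) + S_a(n - r a, k - r),
   and iterating,
     S_a(n, k) = sum_(t >= 0) C(n - (rt+1) a, k - rt - 1) - C(n - r(t+1) a, k - r(t+1)).
   Summed over a, the terms t = 0 give the coefficient of x^n q^k in
   xq/(1-x) * C and the others that of -q^r sum_j x^(rj) (1 - q x^j)/(1 - q^r x^(rj)) * C.
   So C = 1 + (1 - D) C for the denominator D, a fixed-point equation whose
   unique solution is 1/D. *)

From mathcomp Require Import all_boot all_order all_algebra.
From mathcomp Require Import zify ring.
From Stdlib Require Import FunctionalExtensionality.
Set Implicit Arguments. Unset Strict Implicit. Unset Printing Implicit Defensive.
Import Order.TTheory GRing.Theory Num.Theory.
Local Open Scope ring_scope.

Ltac case_ifs := repeat match goal with |- context [if ?b then _ else _] => case: (boolP b) end.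

Lemma big_ord_pulse (N a : nat) (F : nat -> int) :
  \sum_(i < N) (if (i : nat) == a then F i else 0) = if (a < N)%N then F a else 0.
Proof. by rewrite -big_mkcond big_ord1_eq. Qed.

Lemma big_ord_trunc (A B : nat) (F : nat -> int) :
  (forall i, (minn A B <= i < maxn A B)%N -> F i = 0) ->
  \sum_(i < A) F i = \sum_(i < B) F i.
Proof.
wlog le_AB : A B / (A <= B)%N => [W F0|F0].
  by case: (leqP A B) => [|/ltnW] h; [exact: W | symmetry; apply: W; rewrite // minnC maxnC].
rewrite (big_ord_widen B F le_AB) big_mkcond; apply: eq_bigr => i _.
case: ifP => // /negbT; rewrite -leqNgt => le_Ai; symmetry; apply: F0.
by rewrite (minn_idPl le_AB) (maxn_idPr le_AB) le_Ai ltn_ord.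
Qed.

Definition fps_mono (a b : nat) : fps :=
  fun n k => if (n == a) && (k == b) then 1 else 0.

Lemma fps_ext (f g : fps) : (forall n k, f n k = g n k) -> f = g.
Proof. by move=> fg; do 2![apply: functional_extensionality => ?]; exact: fg. Qed.

Lemma fps_mul_monoL a b (f : fps) n k :
  fps_mul (fps_mono a b) f n k =
  if (a <= n)%N && (b <= k)%N then f (n - a)%N (k - b)%N else 0.
Proof.
rewrite /fps_mul; transitivity (\sum_(i < n.+1) if (i : nat) == a then
  \sum_(j < k.+1) (if (j : nat) == b then f (n - i)%N (k - j)%N else 0) else 0).
  apply: eq_bigr => i _; rewrite /fps_mono; case: eqP => _ /=.
    by apply: eq_bigr => j _; case: eqP; rewrite ?mul1r ?mul0r.
  by rewrite big1 // => j _; rewrite mul0r.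
rewrite (big_ord_pulse _ _ (fun i => \sum_(j < k.+1)
  (if (j : nat) == b then f (n - i)%N (k - j)%N else 0))).
by rewrite (big_ord_pulse _ _ (fun j => f (n - a)%N (k - j)%N)) !ltnS; case: (a <= n)%N.
Qed.

Lemma fps_mul_mono a b c d : fps_mul (fps_mono a b) (fps_mono c d) = fps_mono (a + c) (b + d).
Proof. by apply: fps_ext => n k; rewrite fps_mul_monoL /fps_mono; case_ifs => //; lia. Qed.

Lemma fps_pow_mono a b m : fps_pow (fps_mono a b) m = fps_mono (a * m) (b * m).
Proof.
elim: m => [|m IHm] /=; first by rewrite !muln0; apply: fps_ext.
by rewrite IHm fps_mul_mono !mulnS.
Qed.

Lemma fps_pow_x m : fps_pow fps_x m = fps_mono m 0.
Proof. by rewrite (fps_pow_mono 1 0) mul1n mul0n. Qed.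

Lemma fps_pow_q m : fps_pow fps_q m = fps_mono 0 m.
Proof. by rewrite (fps_pow_mono 0 1) mul1n mul0n. Qed.

Lemma fps_mul_subl (f g h : fps) n k :
  fps_mul (fps_sub f g) h n k = fps_mul f h n k - fps_mul g h n k.
Proof.
rewrite /fps_mul -sumrB; apply: eq_bigr => i _; rewrite -sumrB.
by apply: eq_bigr => j _; rewrite mulrBl.
Qed.

Lemma fps_mul_suml (I : Type) (s : seq I) (F : I -> fps) (b g : fps) n k :
  (forall i j, (i <= n)%N -> (j <= k)%N -> b i j = \sum_(x <- s) F x i j) ->
  fps_mul b g n k = \sum_(x <- s) fps_mul (F x) g n k.
Proof.
move=> bE; rewrite /fps_mul; transitivity (\sum_(i < n.+1) \sum_(j < k.+1)
  \sum_(x <- s) F x i j * g (n - i)%N (k - j)%N).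
  by apply: eq_bigr => i _; apply: eq_bigr => j _; rewrite bE -1?ltnS // mulr_suml.
by under eq_bigr => i _ do rewrite exchange_big; rewrite exchange_big.
Qed.

Lemma fps_mul_sumr (I : Type) (s : seq I) (G : I -> fps) (b g : fps) n k :
  (forall i j, (i <= n)%N -> (j <= k)%N -> g i j = \sum_(x <- s) G x i j) ->
  fps_mul b g n k = \sum_(x <- s) fps_mul b (G x) n k.
Proof.
move=> gE; rewrite /fps_mul; transitivity (\sum_(i < n.+1) \sum_(j < k.+1)
  \sum_(x <- s) b i j * G x (n - i)%N (k - j)%N).
  by apply: eq_bigr => i _; apply: eq_bigr => j _; rewrite gE ?leq_subr // mulr_sumr.
by under eq_bigr => i _ do rewrite exchange_big; rewrite exchange_big.
Qed.

Section Geometric.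

Variable b : fps.
Hypothesis b00 : b 0%N 0%N = 0.

Lemma fps_pow_coef_small i n k : (n + k < i)%N -> fps_pow b i n k = 0.
Proof.
elim: i n k => [|i IHi] n k //= lt_nk_i.
rewrite /fps_mul big1 // => i' _; rewrite big1 // => j' _.
have [/andP[/eqP -> /eqP ->]|ij0] := boolP ((i' == 0%N :> nat) && (j' == 0%N :> nat)).
  by rewrite b00 mul0r.
rewrite IHi ?mulr0 //; have := ltn_ord i'; have := ltn_ord j'; move: ij0 lt_nk_i; lia.
Qed.

Lemma fps_geom_trunc N n k : (n + k < N)%N ->
  fps_geom b n k = \sum_(i < N) fps_pow b i n k.
Proof.
move=> lt_nk_N; apply: (big_ord_trunc (F := fun i => fps_pow b i n k)) => i /andP[le_i _].
by apply: fps_pow_coef_small; move: le_i; rewrite minnE; lia.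
Qed.

Lemma fps_geomE n k : fps_geom b n k = fps_const 1 n k + fps_mul b (fps_geom b) n k.
Proof.
rewrite (@fps_mul_sumr _ (index_enum 'I_(n + k).+2) (fun i => fps_pow b i)); last first.
  by move=> i j le_in le_jk; apply: fps_geom_trunc; lia.
rewrite /fps_geom big_ord_recl; congr (_ + _).
apply: (big_ord_trunc (F := fun i => fps_mul b (fps_pow b i) n k)) => i.
rewrite minnE maxnE => /andP[le_i lt_i].
by rewrite -[LHS]/(fps_pow b i.+1 n k) fps_pow_coef_small //; lia.
Qed.

Lemma fps_geom_unique (f : fps) :
  (forall n k, f n k = fps_const 1 n k + fps_mul b f n k) ->
  forall n k, f n k = fps_geom b n k.
Proof.
move=> fE; suff eq_f : forall N n k, (n + k < N)%N -> f n k = fps_geom b n k.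
  by move=> n k; apply: (eq_f (n + k).+1).
elim=> [//|N IHN] n k lt_nk_N; rewrite fE fps_geomE; congr (_ + _).
apply: eq_bigr => i _; apply: eq_bigr => j _.
have [/andP[/eqP -> /eqP ->]|ij0] := boolP ((i == 0%N :> nat) && (j == 0%N :> nat)).
  by rewrite b00 !mul0r.
rewrite IHN //; have := ltn_ord i; have := ltn_ord j; move: ij0 lt_nk_N; lia.
Qed.

End Geometric.

Lemma fps_mul_mono_geom a b c d i j M : (0 < c + d)%N -> (i + j < M)%N ->
  fps_mul (fps_mono a b) (fps_geom (fps_mono c d)) i j =
  \sum_(m < M) fps_mono (a + c * m) (b + d * m) i j.
Proof.
move=> cd_gt0 lt_ij_M; rewrite fps_mul_monoL.
case: ifP => [/andP[le_ai le_bj]|ab_out]; last first.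
  by rewrite big1 // => m _; rewrite /fps_mono; case: ifP => // /andP[/eqP ei /eqP ej];
    move: ab_out; rewrite ei ej !leq_addr.
have cd00 : fps_mono c d 0 0 = 0 by rewrite /fps_mono; case: c d cd_gt0 => [|?] [|?].
rewrite (fps_geom_trunc cd00 (N := M)); last by lia.
by apply: eq_bigr => m _; rewrite fps_pow_mono /fps_mono; case_ifs => //; lia.
Qed.

Definition xq_series : fps := fps_mul (fps_mul fps_x fps_q) (fps_geom fps_x).

Lemma xq_series_coef i j M : (i + j < M)%N ->
  xq_series i j = \sum_(m < M) fps_mono m.+1 1 i j.
Proof.
move=> lt_ij_M; rewrite /xq_series [fps_mul fps_x fps_q](fps_mul_mono 1 0 0 1).
rewrite (@fps_mul_mono_geom 1 1 1 0 _ _ M) //.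
by apply: eq_bigr => m _; rewrite mul1n mul0n addn0 add1n.
Qed.

Definition long_run_term (r j : nat) : fps :=
  fps_mul (fps_mul (fps_pow fps_x (r * j))
                   (fps_sub (fps_const 1) (fps_mul fps_q (fps_pow fps_x j))))
          (fps_geom (fps_mul (fps_pow fps_q r) (fps_pow fps_x (r * j)))).

Lemma long_run_term_coef r j i l M : (0 < r)%N -> (i + l < M)%N ->
  long_run_term r j i l = \sum_(m < M)
    (fps_mono (r * j + r * j * m) (r * m) i l - fps_mono (r * j + j + r * j * m) (r * m).+1 i l).
Proof.
move=> r_gt0 lt_il_M; rewrite /long_run_term.
have -> : fps_mul (fps_pow fps_x (r * j)) (fps_sub (fps_const 1) (fps_mul fps_q (fps_pow fps_x j)))
        = fps_sub (fps_mono (r * j) 0) (fps_mono (r * j + j) 1).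
  apply: fps_ext => n k; rewrite !fps_pow_x fps_mul_monoL [fps_mul fps_q _](fps_mul_mono 0 1 j 0).
  by rewrite /fps_sub /fps_const /fps_mono; case_ifs => //; lia.
rewrite fps_pow_q fps_pow_x fps_mul_mono add0n addn0 fps_mul_subl.
rewrite !(@fps_mul_mono_geom _ _ (r * j) r _ _ M) ?addn_gt0 ?r_gt0 ?orbT // -sumrB.
by apply: eq_bigr => m _; rewrite add0n add1n.
Qed.

Definition long_run_series (r : nat) : fps :=
  fps_mul (fps_pow fps_q r) (fps_sum1 (long_run_term r)).

(* x^(rj(m+1)) q^(r(m+1)) (1 - x^j q): the m-th term in the expansion of the
   j-th summand of the denominator. *)
Definition long_run_diff (r j m : nat) : fps :=
  fps_sub (fps_mono (r * j * m.+1) (r * m.+1)) (fps_mono (r * j * m.+1 + j) (r * m.+1).+1).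

Lemma long_run_series_coef r i j M : (0 < r)%N -> (i + j < M)%N ->
  long_run_series r i j = \sum_(J < M) \sum_(m < M) long_run_diff r J.+1 m i j.
Proof.
move=> r_gt0 lt_ij_M; rewrite /long_run_series fps_pow_q fps_mul_monoL /=.
case: (leqP r j) => [le_rj|lt_jr]; last first.
  rewrite big1 // => J _; rewrite big1 // => m _.
  by rewrite /long_run_diff /fps_sub /fps_mono; case_ifs => //; nia.
rewrite subn0 /fps_sum1 big_add1 /= big_mkord.
rewrite (eq_bigr (fun J : 'I_(i + (j - r)) => \sum_(m < M) long_run_diff r J.+1 m i j)); last first.
  move=> J _; rewrite (@long_run_term_coef _ _ _ _ M) //; last by lia.
  by apply: eq_bigr => m _; rewrite /long_run_diff /fps_sub /fps_mono; case_ifs => //; nia.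
apply: (big_ord_trunc (F := fun J => \sum_(m < M) long_run_diff r J.+1 m i j)) => J.
rewrite minnE maxnE => /andP[le_J _].
by rewrite big1 // => m _; rewrite /long_run_diff /fps_sub /fps_mono; case_ifs => //; nia.
Qed.

Lemma one_sub_denom r :
  fps_sub (fps_const 1) (denom_series r) = fps_sub xq_series (long_run_series r).
Proof. by apply: fps_ext => n k; rewrite /fps_sub /denom_series /fps_add /fps_sub; ring. Qed.

Lemma one_sub_denom00 r : (0 < r)%N -> fps_sub (fps_const 1) (denom_series r) 0 0 = 0.
Proof.
move=> r_gt0; rewrite one_sub_denom /fps_sub (@xq_series_coef _ _ 1) //.
rewrite (@long_run_series_coef _ _ _ 1) // !big_ord1.
by rewrite /long_run_diff /fps_sub /fps_mono; case_ifs; lia.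
Qed.

Fixpoint comps (n k : nat) : seq (seq nat) :=
  if k is k'.+1 then [seq a :: s | a <- iota 1 n, s <- comps (n - a) k']
  else if n == 0%N then [:: [::]] else [::].

Lemma uniq_comps n k : uniq (comps n k).
Proof.
elim: k n => [|k IHk] n /=; first by case: (n == 0%N).
apply: allpairs_uniq_dep => [||[a s] [b t] _ _ [-> ->]] //; first exact: iota_uniq.
Qed.

Lemma mem_comps n k s : (s \in comps n k) = is_composition n k s.
Proof.
elim: k n s => [|k IHk] n [|a s] //=.
- by rewrite /is_composition /= [0%N == n]eq_sym; case: (n == 0%N).
- by case: (n == 0%N).
- by apply/allpairsPdep => -[b [t []]].
rewrite /is_composition /= eqSS; apply/allpairsPdep/and3P.
  move=> [b [t [+ + [-> ->]]]]; rewrite mem_iota IHk => b_range /and3P[-> -> /eqP sum_t].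
  by split=> //; apply/eqP; lia.
move=> [size_s /andP[a_gt0 pos_s] /eqP sum_s]; exists a, s; split=> //.
  by rewrite mem_iota; lia.
by rewrite IHk /is_composition size_s pos_s; apply/eqP; lia.
Qed.

Lemma leq_sumn_mem (s : seq nat) x : x \in s -> (x <= sumn s)%N.
Proof.
elim: s => [//|y s IHs]; rewrite inE => /orP[/eqP ->|/IHs]; first exact: leq_addr.
by move/leq_trans; apply; apply: leq_addl.
Qed.

Lemma Ccount_comps n k r : Ccount n k r = count (no_long_run r) (comps n k).
Proof.
rewrite /Ccount cardsE cardE /enum_mem size_filter -enumT.
pose val_seq (t : k.-tuple 'I_n.+1) := [seq val i | i <- t].
have val_seq_inj : injective val_seq by move=> t1 t2 /(inj_map val_inj) /val_inj.
rewrite -(count_map val_seq (fun s => is_composition n k s && no_long_run r s)).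
rewrite -(eq_count (a1 := predI (no_long_run r) (is_composition n k))); last first.
  by move=> s /=; rewrite andbC.
rewrite -count_filter; apply/permP; apply: uniq_perm.
- by apply: filter_uniq; rewrite map_inj_uniq ?enum_uniq.
- exact: uniq_comps.
move=> s; rewrite mem_filter mem_comps.
have [comp_s|] //= := boolP (is_composition n k s).
case/and3P: (comp_s) => /eqP size_s _ /eqP sum_s.
have size_inord : size [seq inord x : 'I_n.+1 | x <- s] == k by rewrite size_map size_s.
apply/mapP; exists (Tuple size_inord); first by rewrite mem_enum.
rewrite /val_seq /= -map_comp map_id_in // => x x_s /=.
by rewrite inordK // ltnS -sum_s leq_sumn_mem.
Qed.

Lemma count_comps_succ (p : pred (seq nat)) n k : count p (comps n k.+1) =
  (\sum_(J < n) count (fun s => p (J.+1 :: s)) (comps (n - J.+1) k))%N.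
Proof.
rewrite /= count_flatten -map_comp sumnE big_map -[1%N]/(1 + 0)%N iotaDl big_map.
by rewrite -val_enum_ord big_map big_enum; apply: eq_bigr => J _ /=; rewrite count_map.
Qed.

Definition Cnum (r n k : nat) : nat := count (no_long_run r) (comps n k).

Definition Cseries (r : nat) : fps := fun n k => (Cnum r n k)%:Z.

(* [rl_aux a c s] lists the run lengths of [nseq c a ++ s]. *)
Definition no_long_run_after (r a c : nat) (s : seq nat) : bool :=
  all (fun l => l < r)%N (rl_aux a c s).

Definition Cnum_after (r a c m k : nat) : nat := count (no_long_run_after r a c) (comps m k).

(* Admissible compositions of m into k parts with first part a; [Cnotfirst]
   counts the remaining ones. *)
Definition Cfirst (r a m k : nat) : int :=
  if (0 < k)%N && (a <= m)%N then (Cnum_after r a 1 (m - a) k.-1)%:Z else 0.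

Definition Cnotfirst (r a m k : nat) : int := (Cnum r m k)%:Z - Cfirst r a m k.

Definition Cnotfirst_shift (r a m k l : nat) : int :=
  if (l * a <= m)%N && (l <= k)%N then Cnotfirst r a (m - l * a) (k - l) else 0.

Lemma no_long_run_after_cons r a c b s : no_long_run_after r a c (b :: s) =
  if b == a then no_long_run_after r a c.+1 s else (c < r)%N && no_long_run_after r b 1 s.
Proof. by rewrite /no_long_run_after /=; case: eqP. Qed.

Lemma Cnum0 r n : Cnum r n 0 = (n == 0%N).
Proof. by rewrite /Cnum /=; case: (n == 0%N). Qed.

Lemma CnumS r n k : Cnum r n k.+1 = (\sum_(J < n) Cnum_after r J.+1 1 (n - J.+1) k)%N.
Proof. exact: count_comps_succ. Qed.

Lemma Cnum_after0 r a c m : Cnum_after r a c m 0 = (m == 0%N) && (c < r)%N.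
Proof.
by rewrite /Cnum_after /=; case: (m == 0%N); rewrite //= /no_long_run_after /= andbT addn0.
Qed.

Lemma Cnum_afterS r a c m k : (0 < a)%N ->
  (Cnum_after r a c m k.+1)%:Z =
  (if (a <= m)%N then (Cnum_after r a c.+1 (m - a) k)%:Z else 0)
  + (c < r)%N%:Z * Cnotfirst r a m k.+1.
Proof.
move=> a_gt0; rewrite /Cnum_after count_comps_succ.
under eq_bigr => J _ do under eq_count => s do rewrite no_long_run_after_cons.
rewrite (big_morph Posz PoszD (erefl 0%:Z)).
pose c_lt_r : int := (c < r)%N%:Z.
transitivity (\sum_(J < m) ((if (J : nat) == a.-1 then
    (Cnum_after r a c.+1 (m - a) k)%:Z - c_lt_r * (Cnum_after r a 1 (m - a) k)%:Z else 0)
  + c_lt_r * (Cnum_after r J.+1 1 (m - J.+1) k)%:Z)).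
  apply: eq_bigr => J _; rewrite (_ : (J.+1 == a) = ((J : nat) == a.-1)); last first.
    by apply/eqP/eqP; lia.
  case: eqP => [->|_]; first by rewrite prednK // subrK.
  rewrite add0r /c_lt_r /Cnum_after; case: (c < r)%N; rewrite ?mul1r ?mul0r //.
  by rewrite (@eq_count _ _ pred0) ?count_pred0.
rewrite big_split /= (big_ord_pulse _ _ (fun=> (Cnum_after r a c.+1 (m - a) k)%:Z
  - c_lt_r * (Cnum_after r a 1 (m - a) k)%:Z)) -mulr_sumr -(big_morph Posz PoszD (erefl 0%:Z)).
rewrite -CnumS /Cnotfirst /Cfirst /= prednK //.
by case: (a <= m)%N; rewrite /c_lt_r; ring.
Qed.

Lemma Cnotfirst_shiftS r a m k l : (0 < a)%N ->
  Cnotfirst_shift r a m k.+1 l.+1 = if (a <= m)%N then Cnotfirst_shift r a (m - a) k l else 0.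
Proof.
move=> a_gt0; rewrite /Cnotfirst_shift mulSn subSS ltnS.
case: (leqP a m) => [le_am|lt_ma]; last by rewrite ifN //; lia.
by rewrite -subnDA (_ : (l * a <= m - a)%N = (a + l * a <= m)%N) //; apply/idP/idP; lia.
Qed.

Lemma Cnum_after_blocks r a k : (0 < a)%N -> forall c m,
  (Cnum_after r a c m k)%:Z = \sum_(l < r - c) Cnotfirst_shift r a m k l.
Proof.
move=> a_gt0; elim: k => [|k IHk] c m.
  rewrite Cnum_after0; case: (ltnP c r) => [lt_cr|le_rc]; last first.
    by rewrite (_ : r - c = 0)%N ?big_ord0 ?andbF //; lia.
  rewrite (_ : r - c = (r - c.+1).+1)%N; last by lia.
  rewrite big_ord_recl big1 ?addr0 => [|l _]; last by rewrite /Cnotfirst_shift andbF.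
  by rewrite /Cnotfirst_shift /Cnotfirst /Cfirst mul0n !subn0 /= Cnum0 andbT subr0.
rewrite Cnum_afterS //; case: (ltnP c r) => [lt_cr|le_rc]; last first.
  rewrite (_ : r - c = 0)%N ?big_ord0; last by lia.
  rewrite mul0r addr0.
  case: (a <= m)%N => //.
  by rewrite IHk (_ : r - c.+1 = 0)%N ?big_ord0 //; lia.
rewrite (_ : r - c = (r - c.+1).+1)%N; last by lia.
rewrite big_ord_recl mul1r addrC; congr (_ + _).
  by rewrite /Cnotfirst_shift mul0n !subn0.
under eq_bigr => l _ do rewrite Cnotfirst_shiftS //.
by case: (a <= m)%N; rewrite ?IHk // big1.
Qed.

Lemma Cfirst_blocks r a m k : (0 < r)%N -> (0 < a)%N ->
  Cfirst r a m k = \sum_(1 <= l < r) Cnotfirst_shift r a m k l.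
Proof.
move=> r_gt0 a_gt0; rewrite -{2}(prednK r_gt0) big_add1 big_mkord /Cfirst.
case: ifP => [/andP[k_gt0 le_am]|out]; last first.
  by rewrite big1 // => l _; rewrite /Cnotfirst_shift; case: ifP => // /andP[]; move: out; nia.
rewrite Cnum_after_blocks // subn1; apply: eq_bigr => l _.
by rewrite -{2}(prednK k_gt0) Cnotfirst_shiftS // le_am.
Qed.

Lemma telescope_blocks (r N : nat) (c s : nat -> int) : (0 < r)%N ->
  (forall l, (N <= l)%N -> c l = 0) -> (forall l, (N <= l)%N -> s l = 0) ->
  (forall l, s l = \sum_(1 <= j < r) (c (l + j)%N - s (l + j)%N)) ->
  s 0%N = \sum_(t < N) (c (r * t).+1 - c (r * t.+1)%N).
Proof.
move=> r_gt0 c_out s_out sE.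
have s_step l : s l = c l.+1 - c (l + r)%N + s (l + r)%N.
  pose f j := c (l + j)%N - s (l + j)%N.
  have sS : s l.+1 = \sum_(2 <= j < r.+1) f j.
    by rewrite sE [RHS]big_add1; apply: eq_bigr => j _; rewrite /f addSnnS.
  have split_ends : s l + f r = f 1%N + s l.+1.
    by rewrite sS sE -big_nat_recr // -big_ltn.
  apply: (addIr (f r)); rewrite split_ends /f addn1; ring.
have s_blocks d l : (N <= l + r * d)%N ->
    s l = \sum_(t < d) (c (l + r * t).+1 - c (l + r * t.+1)%N).
  elim: d l => [|d IHd] l le_N; first by rewrite big_ord0 s_out // -(addn0 l) -(muln0 r).
  rewrite s_step big_ord_recl muln0 addn0 muln1 (IHd (l + r)%N); last by rewrite -addnA -mulnS.
  by congr (_ + _); apply: eq_bigr => t _; rewrite lift0 !mulnS !addnA.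
by rewrite (s_blocks N) ?add0n // leq_pmull.
Qed.

Lemma Cfirst_telescoped r a n k N : (0 < r)%N -> (0 < a)%N -> (k < N)%N ->
  Cfirst r a n k = fps_mul (fps_mono a 1) (Cseries r) n k
    - \sum_(m < N) fps_mul (long_run_diff r a m) (Cseries r) n k.
Proof.
move=> r_gt0 a_gt0 lt_kN.
pose c l := fps_mul (fps_mono (l * a) l) (Cseries r) n k.
pose s l := if (l * a <= n)%N && (l <= k)%N then Cfirst r a (n - l * a) (k - l) else 0.
have c_out l : (N.+1 <= l)%N -> c l = 0.
  by move=> le_l; rewrite /c fps_mul_monoL; case: ifP => // /andP[_]; lia.
have s_out l : (N.+1 <= l)%N -> s l = 0.
  by move=> le_l; rewrite /s; case: ifP => // /andP[_]; lia.
have sE l : s l = \sum_(1 <= j < r) (c (l + j)%N - s (l + j)%N).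
  rewrite {1}/s; case: ifP => [/andP[le_la le_lk]|out]; last first.
    rewrite big1 // => j _; rewrite /c /s fps_mul_monoL.
    by rewrite ifF ?subrr ?ifF //; apply/negbTE; move: out; nia.
  rewrite Cfirst_blocks //; apply: eq_big_nat => j _.
  rewrite /Cnotfirst_shift /Cnotfirst /c /s fps_mul_monoL /Cseries.
  have -> : ((l + j) * a <= n)%N && (l + j <= k)%N = (j * a <= n - l * a)%N && (j <= k - l)%N.
    by apply/idP/idP; nia.
  by case: ifP => // _; rewrite mulnDl !subnDA.
have := telescope_blocks r_gt0 c_out s_out sE.
rewrite /s mul0n !subn0 leq0n /= => ->.
rewrite sumrB big_ord_recl big_ord_recr /= (c_out (r * N.+1)%N) ?addr0; last by rewrite leq_pmull.
rewrite -addrA -sumrB -sumrN /c muln0 mul1n; congr (_ + _); apply: eq_bigr => m _.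
by rewrite fps_mul_subl opprB /bump /= add1n mulSn (addnC a) !(mulnAC r a).
Qed.

Lemma Cnum_first_part r n k N : (n <= N)%N ->
  (Cnum r n k)%:Z = fps_const 1 n k + \sum_(a < N) Cfirst r a.+1 n k.
Proof.
move=> le_nN; case: k => [|k].
  rewrite Cnum0 big1 ?addr0 => [|a _]; last by rewrite /Cfirst.
  by rewrite /fps_const andbT; case: (n == 0%N).
rewrite CnumS (big_morph Posz PoszD (erefl 0%:Z)) /fps_const andbF add0r.
transitivity (\sum_(a < n) Cfirst r a.+1 n k.+1).
  by apply: eq_bigr => a _; rewrite /Cfirst /= ltn_ord.
apply: (big_ord_trunc (F := fun a => Cfirst r a.+1 n k.+1)) => a.
by rewrite minnE maxnE => /andP[le_a _]; rewrite /Cfirst ifF //; apply/negbTE; lia.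
Qed.

Lemma Cseries_rec r n k : (0 < r)%N ->
  Cseries r n k = fps_const 1 n k
    + fps_mul (fps_sub (fps_const 1) (denom_series r)) (Cseries r) n k.
Proof.
move=> r_gt0; set M := (n + k).+1; set C := Cseries r.
have xqE : fps_mul xq_series C n k = \sum_(a < M) fps_mul (fps_mono a.+1 1) C n k.
  by apply: fps_mul_suml => i j le_in le_jk; apply: xq_series_coef; lia.
have lrE : fps_mul (long_run_series r) C n k =
    \sum_(a < M) \sum_(m < M) fps_mul (long_run_diff r a.+1 m) C n k.
  rewrite (fps_mul_suml (s := index_enum 'I_M)
    (F := fun a i j => \sum_(m < M) long_run_diff r a.+1 m i j)); last first.
    by move=> i j le_in le_jk; apply: long_run_series_coef; lia.
  by apply: eq_bigr => a _; apply: fps_mul_suml.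
rewrite [LHS]/C /Cseries (Cnum_first_part r k (N := M)); last by lia.
congr (_ + _); rewrite one_sub_denom fps_mul_subl xqE lrE -sumrB.
by apply: eq_bigr => a _; rewrite (@Cfirst_telescoped _ _ _ _ M) // ltnS leq_addl.
Qed.

Lemma lhs_series_Cseries r : lhs_series r = Cseries r.
Proof. by apply: fps_ext => n k; rewrite /lhs_series Ccount_comps. Qed.

Theorem theorem3 (r : nat) (hr : (1 <= r)%N) :
  forall n k : nat, lhs_series r n k = rhs_series r n k.
Proof.
rewrite lhs_series_Cseries; apply: fps_geom_unique; first exact: one_sub_denom00.
by move=> n k; exact: Cseries_rec.
Qed.
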